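(* Let $q\ge3$ be an integer and $f(x)=\log\left|\frac{\sin\pi qx}{\sin\pi x}\right|$. For all $t\in\left(\frac{3}{8q},\frac{5}{8q}\right)$ and all $0<s\le q^{-1}-t$, $$H(t,s):=A(s)+B(t,s)<0,$$ where $A(s)=\log\frac{\sin\pi s}{\sin\pi(q^{-1}+s)}$ and $B(t,s)=f(0)-f(t)-f'(t)\frac{q^{-1}-t-s}{q-1}$.
   Context: $f(0)=\log q$ (value of $f$ at $0$ by continuity). *)

From Stdlib Require Import Reals.
From Coquelicot Require Import Coquelicot.
Open Scope R_scope.

Definition fq (q : nat) (x : R) : R :=
  ln (Rabs (sin (PI * INR q * x) / sin (PI * x))).

(* f(0) := log q (value by continuity) *)
Definition fq0 (q : nat) : R := ln (INR q).

Definition Aq (q : nat) (s : R) : R :=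
  ln (sin (PI * s) / sin (PI * (/ INR q + s))).

Definition Bq (q : nat) (t s : R) : R :=
  fq0 q - fq q t - Derive (fq q) t * ((/ INR q - t - s) / (INR q - 1)).

Definition Hq (q : nat) (t s : R) : R := Aq q s + Bq q t s.

From Stdlib Require Import Reals Lra Psatz Machin.
From Coquelicot Require Import Coquelicot.
Open Scope R_scope.

(* Put a = π/q, x = π t, σ = π s and δ = a - x - σ >= 0.  Then
   H = ln r + c δ + ln (q sin(a - x) sin x / (sin(2a - x) sin(q x)))
   with r = sin σ sin(2a - x) / (sin(a + σ) sin(a - x)) and c = -f'(t) / (π (q - 1)).
   The identity sin σ sin(2a - x) - sin(a + σ) sin(a - x) = - sin a sin δ and
   ln r <= r - 1 give ln r + c δ <= 0 as soon as c δ sin(a + σ) sin(a - x) <= sin a sin δ,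
   which holds because c (a - x) <= 3 / (2 (q - 1)).  The last logarithm is negative
   since q sin(a - x) sin x < sin(2a - x) sin(q x).  Both inequalities follow from
   Taylor bounds for sin and cos, the worst case being q = 3. *)

Lemma PI_bounds : 3.1415 < PI < 3.1416.
Proof.
destruct (PI_2_3_7_ineq 2) as [lower upper].
unfold PI_2_3_7_tg, tg_alt, Ratan_seq in *; simpl in *; lra.
Qed.

Lemma sin_ge_cubic y : 0 <= y <= PI -> y - y ^ 3 / 6 <= sin y.
Proof.
intros [y0 yPI]; destruct (sin_bound y 0 y0 yPI) as [lower _].
unfold sin_approx, sin_term in lower; simpl in lower; lra.
Qed.

Lemma sin_le_id y : 0 <= y -> sin y <= y.
Proof.
intros [ypos | <-]; [now apply Rlt_le, sin_lt_x | rewrite sin_0; lra].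
Qed.

Lemma cos_quadratic_bounds y : - PI / 2 <= y <= PI / 2 ->
  1 - y ^ 2 / 2 <= cos y <= 1 - y ^ 2 / 2 + y ^ 4 / 24.
Proof.
intros [lo hi]; destruct (cos_bound y 0 lo hi) as [lower upper].
unfold cos_approx, cos_term in lower, upper; simpl in lower, upper; lra.
Qed.

Lemma cos_ge_092 y : - PI / 8 <= y <= PI / 8 -> 0.92 <= cos y.
Proof.
intros y_range; pose proof PI_bounds.
destruct (cos_quadratic_bounds y) as [lower _]; [lra|].
assert (y ^ 2 <= 0.16) by nra.
lra.
Qed.

Lemma mul_cos_le_sin x : 0 <= x <= PI / 2 -> x * cos x <= sin x.
Proof.
intros [x0 xPI2]; pose proof PI_bounds.
destruct (cos_quadratic_bounds x) as [_ cos_upper]; [lra|].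
assert (sin_lower : x - x ^ 3 / 6 <= sin x) by (apply sin_ge_cubic; lra).
assert (x * cos x <= x * (1 - x ^ 2 / 2 + x ^ 4 / 24)) by (apply Rmult_le_compat_l; lra).
assert (0 <= x ^ 3 * (8 - x ^ 2)) by (apply Rmult_le_pos; [apply pow_le|]; nra).
nra.
Qed.

Definition cot (x : R) : R := cos x / sin x.

Lemma cot_le_inv x : 0 < x <= PI / 2 -> cot x <= / x.
Proof.
intros [x0 xPI2].
assert (0 < sin x) by (apply sin_gt_0; lra).
assert (x * cos x <= sin x) by (apply mul_cos_le_sin; lra).
unfold cot; apply (Rmult_le_reg_l (x * sin x)); [nra|].
replace (x * sin x * (cos x / sin x)) with (x * cos x) by (field; lra).
replace (x * sin x * / x) with (sin x) by (field; lra).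
assumption.
Qed.

Lemma ln_le_sub_1 r : 0 < r -> ln r <= r - 1.
Proof.
intros r0; pose proof (exp_ineq1_le (ln r)) as H; rewrite exp_ln in H; lra.
Qed.

Lemma sin_cross_identity a s d :
  sin s * sin (a + s + d) - sin (a + s) * sin (s + d) = - sin a * sin d.
Proof.
replace a with (a + s - s) at 3 by ring.
rewrite (sin_plus (a + s) d), (sin_plus s d), (sin_minus (a + s) s); ring.
Qed.

Lemma sign_div_Rabs r : r <> 0 -> sign r / Rabs r = / r.
Proof.
intros r0; destruct (Rlt_or_le 0 r) as [rpos | rneg].
- rewrite sign_eq_1, Rabs_pos_eq by lra; field; lra.
- rewrite sign_eq_m1, Rabs_left by lra; field; lra.
Qed.

Lemma is_derive_fq q t : sin (PI * INR q * t) <> 0 -> sin (PI * t) <> 0 ->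
  is_derive (fq q) t (PI * INR q * cot (PI * INR q * t) - PI * cot (PI * t)).
Proof.
intros num0 den0; unfold fq.
assert (ratio0 : sin (PI * INR q * t) / sin (PI * t) <> 0)
  by (unfold Rdiv; apply Rmult_integral_contrapositive; split;
      [|apply Rinv_neq_0_compat]; assumption).
unfold cot; auto_derive.
- repeat split; [assumption | exact ratio0 | apply Rabs_pos_lt, ratio0].
- rewrite Rmult_assoc; change (sign ?r * / Rabs ?r) with (sign r / Rabs r).
  rewrite sign_div_Rabs by exact ratio0; field; split; assumption.
Qed.

(* With x = π t, π (q - 1) slope q x = - f'(t). *)
Definition slope (q x : R) : R := (cot x - q * cot (q * x)) / (q - 1).

Lemma Hq_trig_form q t s :
  1 < INR q -> 0 < sin (PI * t) -> 0 < sin (INR q * (PI * t)) ->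
  0 < sin (PI * s) -> 0 < sin (PI / INR q + PI * s) ->
  Hq q t s =
    ln (sin (PI * s)) - ln (sin (PI / INR q + PI * s)) + ln (INR q)
    - ln (sin (INR q * (PI * t))) + ln (sin (PI * t))
    + slope (INR q) (PI * t) * (PI / INR q - PI * t - PI * s).
Proof.
intros q1 sin_x sin_qx sin_s sin_as.
assert (qx : PI * INR q * t = INR q * (PI * t)) by ring.
assert (shift : PI * (/ INR q + s) = PI / INR q + PI * s) by (unfold Rdiv; ring).
assert (derivative : Derive (fq q) t = PI * INR q * cot (PI * INR q * t) - PI * cot (PI * t))
  by (apply is_derive_unique, is_derive_fq; rewrite ?qx; lra).
unfold Hq, Aq, Bq, fq0; rewrite derivative; unfold fq.
rewrite qx, shift, Rabs_pos_eq by (apply Rlt_le, Rdiv_lt_0_compat; assumption).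
rewrite !ln_div by assumption.
unfold slope, cot; field; lra.
Qed.

Lemma log_combination_neg a x s q y c :
  0 < x -> 0 < s <= a - x -> 2 * a - x < PI -> 0 < q ->
  q * sin (a - x) * sin x < sin (2 * a - x) * sin y ->
  c * (a - x - s) * (sin (a + s) * sin (a - x)) <= sin a * sin (a - x - s) ->
  ln (sin s) - ln (sin (a + s)) + ln q - ln (sin y) + ln (sin x)
    + c * (a - x - s) < 0.
Proof.
intros x0 [s0 s_le] two_a q0 product_ineq slope_ineq.
pose proof PI_bounds.
assert (0 < sin s) by (apply sin_gt_0; lra).
assert (0 < sin x) by (apply sin_gt_0; lra).
assert (0 < sin (a + s)) by (apply sin_gt_0; lra).
assert (0 < sin (a - x)) by (apply sin_gt_0; lra).
assert (0 < sin (2 * a - x)) by (apply sin_gt_0; lra).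
assert (0 < q * sin (a - x) * sin x) by (repeat apply Rmult_lt_0_compat; lra).
assert (0 < sin y).
{ destruct (Rlt_or_le 0 (sin y)) as [| y_neg]; [assumption|].
  assert (sin (2 * a - x) * sin y <= 0) by nra; lra. }
set (r := sin s * sin (2 * a - x) / (sin (a + s) * sin (a - x))).
assert (r_sub_1 : r - 1 = - (sin a * sin (a - x - s)) / (sin (a + s) * sin (a - x))).
{ unfold r; rewrite Ropp_mult_distr_l, <- (sin_cross_identity a s (a - x - s)).
  replace (a + s + (a - x - s)) with (2 * a - x) by ring.
  replace (s + (a - x - s)) with (a - x) by ring.
  field; lra. }
assert (ln r <= - (c * (a - x - s))).
{ apply Rle_trans with (r - 1); [apply ln_le_sub_1; unfold r; apply Rdiv_lt_0_compat; nra|].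
  rewrite r_sub_1; apply (Rmult_le_reg_r (sin (a + s) * sin (a - x))); [nra|].
  unfold Rdiv; rewrite Rmult_assoc, Rinv_l by nra; lra. }
assert (ln (q * sin (a - x) * sin x) < ln (sin (2 * a - x) * sin y))
  by (apply ln_increasing; [nra | assumption]).
unfold r in *; rewrite ln_div, !ln_mult in * by nra.
lra.
Qed.

Lemma cot_gap_le y : 3 * PI / 8 < y < 5 * PI / 8 -> (/ y - cot y) * (PI - y) <= 3 / 2.
Proof.
intros y_range; pose proof PI_bounds.
set (phi := y - PI / 2).
assert (phi_range : - PI / 8 < phi < PI / 8) by (unfold phi; lra).
assert (cos_phi : 0.92 <= cos phi) by (apply cos_ge_092; lra).
assert (cot_y : cot y = - (sin phi / cos phi)).
{ unfold cot; replace y with (phi + PI / 2) by (unfold phi; field).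
  rewrite sin_plus, cos_plus, sin_PI2, cos_PI2; field; lra. }
assert (inv_y : / y * (PI / 2 + phi) = 1) by (unfold phi; field; lra).
assert (0 < / y) by (apply Rinv_0_lt_compat; lra).
replace (PI - y) with (PI / 2 - phi) by (unfold phi; field).
rewrite cot_y; unfold Rminus at 1; rewrite Ropp_involutive.
destruct (Rle_or_lt 0 phi) as [phi0 | phi0].
- assert (tan_phi : sin phi / cos phi <= phi / 0.92).
  { assert (0 <= sin phi <= phi) by (split; [apply sin_ge_0 | apply sin_le_id]; lra).
    unfold Rdiv; apply Rmult_le_compat; try lra.
    - apply Rlt_le, Rinv_0_lt_compat; lra.
    - apply Rinv_le_contravar; lra. }
  assert ((/ y + sin phi / cos phi) * (PI / 2 - phi) <= (/ y + phi / 0.92) * (PI / 2 - phi))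
    by (apply Rmult_le_compat_r; lra).
  nra.
- assert (tan_phi : sin phi / cos phi <= 0.97 * phi).
  { assert (sin (- phi) >= - phi - (- phi) ^ 3 / 6) by (apply Rle_ge, sin_ge_cubic; lra).
    rewrite sin_neg in *.
    assert (sin phi <= 0.97 * phi) by nra.
    assert (cos phi <= 1) by apply COS_bound.
    apply (Rmult_le_reg_r (cos phi)); [lra|].
    unfold Rdiv; rewrite Rmult_assoc, Rinv_l by lra; nra. }
  assert ((/ y + sin phi / cos phi) * (PI / 2 - phi) <= (/ y + 0.97 * phi) * (PI / 2 - phi))
    by (apply Rmult_le_compat_r; lra).
  nra.
Qed.

(* Tightest near th = 1/2, with margin about 0.03; the squares below certify it. *)
Lemma cross_sine_poly p a th :
  3.1415 < p < 3.1416 -> 0 < a <= p / 3 -> 3 / 8 < th < 5 / 8 ->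
  p * th * (1 - th) < 0.92 * ((2 - th) * (1 - a ^ 2 * (2 - th) ^ 2 / 6)).
Proof.
intros p_range a_range th_range.
assert (a ^ 2 <= 1.0967) by nra.
assert (0 < (2 - th) ^ 2) by nra.
assert (a ^ 2 * (2 - th) ^ 2 <= 1.0967 * (2 - th) ^ 2) by (apply Rmult_le_compat_r; lra).
assert (p * (th * (1 - th)) <= 3.1416 * (th * (1 - th)))
  by (apply Rmult_le_compat_r; [apply Rmult_le_pos |]; lra).
assert (0 <= (th - 1 / 2) ^ 2 * (th - 3 / 8)) by (apply Rmult_le_pos; [apply pow2_ge_0 | lra]).
assert (0 <= (th - 1 / 2) ^ 2 * (5 / 8 - th)) by (apply Rmult_le_pos; [apply pow2_ge_0 | lra]).
pose proof (pow2_ge_0 (th - 0.455)).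
nra.
Qed.

Lemma gap_constant_poly p a :
  3.1415 < p < 3.1416 -> 0 < a <= p / 3 ->
  9 / 4 <= p * (1 - a ^ 2 / 6) * (1 - (5 / 8 * a) ^ 2 / 6).
Proof.
intros p_range a_range.
assert (a ^ 2 <= 1.0967) by nra.
replace ((5 / 8 * a) ^ 2) with (25 / 64 * a ^ 2) by field.
apply Rle_trans with (3.1415 * (1 - 1.0967 / 6) * (1 - 25 / 64 * 1.0967 / 6)); [lra|].
apply Rmult_le_compat; [| | apply Rmult_le_compat |]; lra.
Qed.

Section Estimates.

Variables q x : R.
Hypothesis q_ge_3 : 3 <= q.
Hypothesis x_range : 3 / 8 * (PI / q) < x < 5 / 8 * (PI / q).

Lemma PI_div_q_range : 0 < PI / q <= PI / 3.
Proof.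
pose proof PI_bounds; split.
- apply Rdiv_lt_0_compat; lra.
- apply Rmult_le_compat_l; [lra | apply Rinv_le_contravar; lra].
Qed.

Lemma qx_range : 3 * PI / 8 < q * x < 5 * PI / 8.
Proof.
pose proof PI_bounds.
replace (3 * PI / 8) with (q * (3 / 8 * (PI / q))) by (field; lra).
replace (5 * PI / 8) with (q * (5 / 8 * (PI / q))) by (field; lra).
split; apply Rmult_lt_compat_l; lra.
Qed.

Lemma cross_sine_ineq :
  q * sin (PI / q - x) * sin x < sin (2 * (PI / q) - x) * sin (q * x).
Proof.
pose proof PI_bounds; pose proof PI_div_q_range; pose proof qx_range.
assert (sin_qx : 0.92 <= sin (q * x)) by (rewrite <- cos_shift; apply cos_ge_092; lra).
set (a := PI / q) in *.
set (th := x / a).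
assert (x_eq : x = a * th) by (unfold th; field; lra).
assert (th_range : 3 / 8 < th < 5 / 8) by (rewrite x_eq in x_range; split; nra).
assert (q_eq : q = PI / a) by (unfold a; field; lra).
assert (sin (a - x) <= a - x) by (apply sin_le_id; lra).
assert (sin x <= x) by (apply sin_le_id; lra).
assert (0 <= sin (a - x)) by (apply sin_ge_0; lra).
assert (0 <= sin x) by (apply sin_ge_0; lra).
assert (sin_2a_x : (2 * a - x) - (2 * a - x) ^ 3 / 6 <= sin (2 * a - x))
  by (apply sin_ge_cubic; lra).
assert (0 <= (2 * a - x) - (2 * a - x) ^ 3 / 6).
{ assert (0 < 2 * a - x <= 2) by lra.
  replace ((2 * a - x) - (2 * a - x) ^ 3 / 6) with ((2 * a - x) * (1 - (2 * a - x) ^ 2 / 6))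
    by field.
  apply Rmult_le_pos; nra. }
apply Rle_lt_trans with (q * (a - x) * x).
{ rewrite !Rmult_assoc; apply Rmult_le_compat_l; [lra | apply Rmult_le_compat; lra]. }
apply Rlt_le_trans with (((2 * a - x) - (2 * a - x) ^ 3 / 6) * 0.92);
  [| apply Rmult_le_compat; lra].
replace (q * (a - x) * x) with (a * (PI * th * (1 - th))) by (rewrite q_eq, x_eq; field; lra).
replace (((2 * a - x) - (2 * a - x) ^ 3 / 6) * 0.92)
  with (a * (0.92 * ((2 - th) * (1 - a ^ 2 * (2 - th) ^ 2 / 6)))) by (rewrite x_eq; field).
apply Rmult_lt_compat_l; [lra | apply cross_sine_poly; lra].
Qed.

Lemma slope_mul_gap_le : slope q x * (PI / q - x) <= 3 / 2 / (q - 1).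
Proof.
pose proof PI_bounds; pose proof PI_div_q_range.
assert (cot x <= / x) by (apply cot_le_inv; lra).
unfold slope, Rdiv at 1 3; rewrite Rmult_assoc, (Rmult_comm (/ (q - 1))), <- Rmult_assoc.
apply Rmult_le_compat_r; [apply Rlt_le, Rinv_0_lt_compat; lra|].
apply Rle_trans with ((/ x - q * cot (q * x)) * (PI / q - x)); [apply Rmult_le_compat_r; lra|].
replace ((/ x - q * cot (q * x)) * (PI / q - x)) with ((/ (q * x) - cot (q * x)) * (PI - q * x))
  by (field; lra).
apply cot_gap_le, qx_range.
Qed.

Lemma gap_constant_le :
  3 / 2 / (q - 1) <= (PI / q - (PI / q) ^ 3 / 6) * (1 - (5 / 8 * (PI / q)) ^ 2 / 6).
Proof.
pose proof PI_bounds; pose proof PI_div_q_range.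
pose proof (gap_constant_poly PI (PI / q) PI_bounds PI_div_q_range) as poly.
apply Rle_trans with (9 / 4 / q).
- apply (Rmult_le_reg_r (q * (q - 1))); [nra|].
  replace (3 / 2 / (q - 1) * (q * (q - 1))) with (3 / 2 * q) by (field; lra).
  replace (9 / 4 / q * (q * (q - 1))) with (9 / 4 * (q - 1)) by (field; lra).
  lra.
- replace ((PI / q - (PI / q) ^ 3 / 6) * (1 - (5 / 8 * (PI / q)) ^ 2 / 6))
    with (PI * (1 - (PI / q) ^ 2 / 6) * (1 - (5 / 8 * (PI / q)) ^ 2 / 6) / q) by (field; lra).
  unfold Rdiv; apply Rmult_le_compat_r; [apply Rlt_le, Rinv_0_lt_compat|]; lra.
Qed.

Lemma slope_term_le d w : 0 <= d <= PI / q - x -> 0 <= w <= 1 ->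
  slope q x * d * (w * sin (PI / q - x)) <= sin (PI / q) * sin d.
Proof.
intros d_range w_range.
pose proof PI_bounds; pose proof PI_div_q_range.
pose proof slope_mul_gap_le; pose proof gap_constant_le.
set (a := PI / q) in *.
assert (0 <= sin (a - x) <= a - x) by (split; [apply sin_ge_0 | apply sin_le_id]; lra).
assert (sin_a : a - a ^ 3 / 6 <= sin a) by (apply sin_ge_cubic; lra).
assert (sin_d : d * (1 - (5 / 8 * a) ^ 2 / 6) <= sin d).
{ apply Rle_trans with (d - d ^ 3 / 6); [|apply sin_ge_cubic; lra].
  assert (d ^ 2 <= (5 / 8 * a) ^ 2) by (apply pow_incr; lra).
  assert (d * d ^ 2 <= d * (5 / 8 * a) ^ 2) by (apply Rmult_le_compat_l; lra).
  simpl in *; lra. }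
destruct (Rle_or_lt (slope q x) 0) as [slope_nonpos | slope_pos].
- assert (0 <= sin a * sin d) by (apply Rmult_le_pos; [apply sin_ge_0 | apply sin_ge_0]; lra).
  assert (0 <= - slope q x * d * (w * sin (a - x))) by (repeat apply Rmult_le_pos; lra).
  lra.
- apply Rle_trans with (d * (slope q x * (a - x))).
  { replace (d * (slope q x * (a - x))) with (slope q x * d * (a - x)) by ring.
    apply Rmult_le_compat_l; [apply Rmult_le_pos|]; nra. }
  apply Rle_trans with (d * ((a - a ^ 3 / 6) * (1 - (5 / 8 * a) ^ 2 / 6)));
    [apply Rmult_le_compat_l; lra|].
  replace (d * ((a - a ^ 3 / 6) * (1 - (5 / 8 * a) ^ 2 / 6)))
    with ((a - a ^ 3 / 6) * (d * (1 - (5 / 8 * a) ^ 2 / 6))) by ring.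
  apply Rmult_le_compat; try lra.
  + assert (a ^ 2 <= 1.1) by nra.
    assert (0 <= a * (1 - a ^ 2 / 6)) by (apply Rmult_le_pos; lra).
    simpl in *; nra.
  + apply Rmult_le_pos; [lra|].
    assert ((5 / 8 * a) ^ 2 <= 1) by nra; lra.
Qed.

End Estimates.

Theorem lemma5p8 (q : nat) (t s : R) :
  (3 <= q)%nat ->
  3 / (8 * INR q) < t < 5 / (8 * INR q) ->
  0 < s <= / INR q - t ->
  Hq q t s < 0.
Proof.
intros q_ge_3 t_range [s_pos s_le].
pose proof PI_bounds.
assert (Q_ge_3 : 3 <= INR q) by (replace 3 with (INR 3) by (simpl; lra); apply le_INR; assumption).
assert (x_range : 3 / 8 * (PI / INR q) < PI * t < 5 / 8 * (PI / INR q)).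
{ replace (3 / 8 * (PI / INR q)) with (PI * (3 / (8 * INR q))) by (field; lra).
  replace (5 / 8 * (PI / INR q)) with (PI * (5 / (8 * INR q))) by (field; lra).
  split; apply Rmult_lt_compat_l; lra. }
assert (sigma_range : 0 < PI * s <= PI / INR q - PI * t).
{ replace (PI / INR q - PI * t) with (PI * (/ INR q - t)) by (field; lra); split; nra. }
pose proof (PI_div_q_range _ Q_ge_3) as a_range.
pose proof (qx_range _ _ Q_ge_3 x_range).
rewrite Hq_trig_form by (lra || (apply sin_gt_0; nra)).
apply log_combination_neg; try lra.
- exact (cross_sine_ineq _ _ Q_ge_3 x_range).
- apply (slope_term_le _ _ Q_ge_3 x_range); [lra|].
  split; [apply sin_ge_0 | apply SIN_bound]; lra.
Qed.
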